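(* Let $G$ be a simple cubic graph on vertex set $[n]$ with girth at least $16$, let $A$ be a MAI set of $G$, and let $B=V(G)\setminus A$. Then $B$ is an AI set, i.e. every vertex of $B$ has at most one neighbour in $B$.
   Context: A vertex set $A$ of a graph $G$ is an AI set (almost independent set) if $\Delta(G[A])\le 1$, i.e. every component of the induced subgraph $G[A]$ is a single vertex or a single edge. A vertex set $A$ is a MAI set (maximum almost independent set) of $G$ if (M1) $A$ is an AI set, (M2) $A$ contains an independent set of size $\alpha(G)$, and (M3) $A$ has maximum cardinality among all vertex sets satisfying (M1) and (M2). *)

From mathcomp Require Import all_boot.
Set Implicit Arguments. Unset Strict Implicit. Unset Printing Implicit Defensive.

Definition simple_graph (T : finType) (e : rel T) : Prop :=
  symmetric e /\ irreflexive e.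

Definition nbhd (T : finType) (e : rel T) (x : T) : {set T} := [set y | e x y].
Definition cubic (T : finType) (e : rel T) : Prop := forall x, #|nbhd e x| = 3.

Definition girth_at_least (T : finType) (e : rel T) (g : nat) : Prop :=
  forall s : seq T, uniq s -> 3 <= size s -> path.cycle e s -> g <= size s.

Definition independent (T : finType) (e : rel T) (I : {set T}) : Prop :=
  forall x y, x \in I -> y \in I -> ~~ e x y.

Definition independentb (T : finType) (e : rel T) (I : {set T}) : bool :=
  [forall x in I, forall y in I, ~~ e x y].

Definition alpha (T : finType) (e : rel T) : nat :=
  \max_(I : {set T} | independentb e I) #|I|.

Definition AI_set (T : finType) (e : rel T) (A : {set T}) : Prop :=
  forall x, x \in A -> #|A :&: nbhd e x| <= 1.

Definition contains_max_indep (T : finType) (e : rel T) (A : {set T}) : Prop :=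
  exists I : {set T}, [/\ I \subset A, independent e I & #|I| = alpha e].

Definition MAI_set (T : finType) (e : rel T) (A : {set T}) : Prop :=
  [/\ AI_set e A, contains_max_indep e A &
      forall A' : {set T}, AI_set e A' -> contains_max_indep e A' -> #|A'| <= #|A|].

From mathcomp Require Import all_boot.

(* Let v be outside A with two neighbours outside A; being cubic, v then has at
   most one neighbour in A.  A maximum independent set I inside A is dominating,
   so that neighbour is some x in I.  If x has a neighbour y in A, then x is the
   only A-neighbour of both v and y, and (I - x) + v + y is an independent set
   larger than alpha.  Otherwise A + v is still an AI set containing I, against
   the maximality of A. *)

Section SimpleGraph.

Set Implicit Arguments. Unset Strict Implicit.

Variables (T : finType) (e : rel T).
Hypotheses (e_sym : symmetric e) (e_irr : irreflexive e).

Lemma independent_card_le_alpha (J : {set T}) :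
  independent e J -> #|J| <= alpha e.
Proof.
move=> indJ; apply: (@leq_bigmax_cond _ (independentb e) (fun I => #|I|)).
by apply/forall_inP=> x xJ; apply/forall_inP=> y yJ; apply: indJ.
Qed.

Lemma cardsI_le1_of_cardsCI_gt1 (A N : {set T}) :
  #|N| <= 3 -> 1 < #|~: A :&: N| -> #|A :&: N| <= 1.
Proof.
move=> N3 out2; have := cardsID A N; rewrite setDE setIC (setIC N) => splitN.
by rewrite -(leq_add2r 2) (leq_trans _ N3) // -splitN leq_add2l.
Qed.

Lemma card_le1_subset1 (S : {set T}) (x : T) :
  x \in S -> (#|S| <= 1) = (S \subset [set x]).
Proof.
move=> xS; apply/idP/idP => [/card_le1P le1S|/subset_leq_card]; last by rewrite cards1.
by apply/subsetP=> t; rewrite in_set1 (le1S x xS).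
Qed.

Lemma independentU1 (I : {set T}) (v : T) :
  independent e I -> {in I, forall t, ~~ e v t} -> independent e (v |: I).
Proof.
move=> indI vI a b; rewrite !in_setU1.
case/predU1P=> [->|aI]; case/predU1P=> [->|bI].
- by rewrite e_irr.
- exact: vI.
- by rewrite e_sym; apply: vI.
- exact: indI.
Qed.

Lemma maximum_independent_dominating (I : {set T}) (v : T) :
  independent e I -> #|I| = alpha e -> v \notin I -> exists2 x, x \in I & e v x.
Proof.
move=> indI cardI vI; have [/exists_inP[x xI evx]|/exists_inPn noNbrI] :=
  boolP [exists x in I, e v x]; first by exists x.
have := independent_card_le_alpha (independentU1 indI noNbrI).
by rewrite cardsU1 vI cardI ltnn.
Qed.

Lemma no_nbr_of_subset1 (A J : {set T}) (v x : T) :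
  A :&: nbhd e v \subset [set x] -> J \subset A :\ x -> {in J, forall t, ~~ e v t}.
Proof.
move=> Nv JA t tJ; apply/negP=> evt; have /setD1P[tx tA] := subsetP JA t tJ.
have /set1P tx' : t \in [set x] by apply: (subsetP Nv); rewrite !inE tA evt.
by rewrite tx' eqxx in tx.
Qed.

Lemma exchange_independent (A I : {set T}) (v x y : T) :
  I \subset A -> independent e I -> x \in I -> y \in A -> e x y -> v \notin A ->
  A :&: nbhd e v \subset [set x] -> A :&: nbhd e y \subset [set x] ->
  exists2 J, independent e J & #|J| = #|I|.+1.
Proof.
move=> IA indI xI yA exy vA Nv Ny.
have yI : y \notin I by apply: contraL exy => yI; apply: indI.
have yx : y != x by apply: contraTneq exy => ->; rewrite e_irr.
have IxA : I :\ x \subset A :\ x by apply: setSD.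
have JA : y |: (I :\ x) \subset A :\ x by rewrite subUset sub1set !inE yx yA.
exists (v |: (y |: (I :\ x))).
  apply: independentU1 (no_nbr_of_subset1 Nv JA).
  apply: independentU1 (no_nbr_of_subset1 Ny IxA).
  by move=> a b /setD1P[_ aI] /setD1P[_ bI]; apply: indI.
have vJ : v \notin y |: (I :\ x).
  by apply: contra vA => /(subsetP JA) /setD1P[].
by rewrite cardsU1 vJ cardsU1 in_setD1 (negbTE yI) andbF (cardsD1 x I) xI.
Qed.

Lemma AI_setU1 (A : {set T}) (v x : T) :
  AI_set e A -> v \notin A -> x \in A -> e v x ->
  A :&: nbhd e v \subset [set x] -> {in A, forall t, ~~ e x t} -> AI_set e (v |: A).
Proof.
move=> AI_A vA xA evx Nv xIso z /setU1P[->|zA].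
  rewrite (card_le1_subset1 (x := x)); last by rewrite !inE xA orbT evx.
  apply/subsetP=> t; rewrite !inE => /andP[/predU1P[->|tA] evt].
    by rewrite e_irr in evt.
  by rewrite -in_set1 (subsetP Nv) // !inE tA.
have [->|zx] := eqVneq z x.
  rewrite (card_le1_subset1 (x := v)); last by rewrite !inE eqxx e_sym evx.
  apply/subsetP=> t; rewrite !inE => /andP[/predU1P[->|tA] ext]; first by rewrite eqxx.
  by rewrite (negbTE (xIso t tA)) in ext.
apply: leq_trans (AI_A z zA); apply/subset_leq_card/subsetP=> t.
rewrite !inE => /andP[/predU1P[->|tA] ezt]; last by rewrite tA.
have /set1P zx' : z \in [set x] by apply: (subsetP Nv); rewrite !inE zA e_sym.
by rewrite zx' eqxx in zx.
Qed.

End SimpleGraph.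

Theorem lemma6 (n : nat) (e : rel 'I_n) (A : {set 'I_n}) :
  simple_graph e -> cubic e -> girth_at_least e 16 -> MAI_set e A ->
  AI_set e (~: A).
Proof.
move=> [e_sym e_irr] cub _ [AI_A [I [IA indI cardI]] maxA] v; rewrite in_setC => vA.
rewrite leqNgt; apply/negP => out2.
have vI : v \notin I by apply: contra vA; apply/subsetP.
have [x xI evx] := maximum_independent_dominating e_sym e_irr indI cardI vI.
have xA : x \in A by apply/(subsetP IA).
have Nv : A :&: nbhd e v \subset [set x].
  rewrite -card_le1_subset1 ?inE ?xA //.
  by apply: cardsI_le1_of_cardsCI_gt1; rewrite ?cub.
have [/exists_inP[y yA exy]|/exists_inPn xIso] := boolP [exists y in A, e x y].
  have Ny : A :&: nbhd e y \subset [set x].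
    by rewrite -card_le1_subset1 ?AI_A // !inE xA e_sym.
  have [J indJ cardJ] := exchange_independent e_sym e_irr IA indI xI yA exy vA Nv Ny.
  by have := independent_card_le_alpha indJ; rewrite cardJ cardI ltnn.
have AI_vA := AI_setU1 e_sym e_irr AI_A vA xA evx Nv xIso.
suff /(maxA _ AI_vA) : contains_max_indep e (v |: A) by rewrite cardsU1 vA add1n ltnn.
by exists I; split; rewrite // subsetU // IA orbT.
Qed.
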